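(* Let $f(x)$ be a real polynomial of degree $K > 1$ with positive leading coefficient, such that all roots of $f'(x)$ are real. Let $k$ be the number of distinct roots of $f'(x)$ that are not inflection points of $f(x)$, and if $k > 0$ sort them as $\alpha_k < \cdots < \alpha_1$; set $\alpha_0 = +\infty$, $f(\alpha_0) = 1$, $\alpha_{k+1} = -\infty$, $f(\alpha_{k+1}) = (-1)^K$. Say that SIGN holds if $f(\alpha_i)f(\alpha_{i-1}) \leq 0$ for all $i = 1,\ldots,k+1$, and that MULT holds if every root $\beta$ of $f'(x)$ with $\mathrm{ord}_\beta(f'(x)) > 1$ is also a root of $f(x)$. Then: (a) $f(x)$ has only real roots if and only if SIGN and MULT hold; (b) all complex roots of $f(x)$ are real and non-negative if and only if SIGN and MULT hold, all roots of $f'(x)$ are non-negative and $(-1)^Kf(0) \geq 0$; (c) all complex roots of $f(x)$ are real and positive if and only if SIGN and MULT hold, all roots of $f'(x)$ are positive and $(-1)^Kf(0) > 0$.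
   Context: $\mathrm{ord}_\beta(g(x))$ denotes the order of vanishing of the polynomial $g$ at $\beta$. *)

From HB Require Import structures.
From mathcomp Require Import all_boot all_order all_algebra.
From mathcomp Require Import polyrcf complex.
From mathcomp Require Import boolp reals.
Set Implicit Arguments. Unset Strict Implicit. Unset Printing Implicit Defensive.
Import Order.TTheory GRing.Theory Num.Theory.
Local Open Scope ring_scope.

Definition inflection_point (R : realFieldType) (f : {poly R}) (x : R) : Prop :=
  exists2 e : R, 0 < e &
    forall t s : R, x - e < t < x -> x < s < x + e ->
      (f^`()^`()).[t] * (f^`()^`()).[s] < 0.

Section Alphas.
Variable R : rcfType.
Implicit Types f : {poly R}.

Definition alphas f : seq R :=
  rev [seq x <- rootsR f^`() | `[< ~ inflection_point f x >]].

(* the sequence f(alpha_0) = 1, f(alpha_1), ..., f(alpha_k),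
   f(alpha_{k+1}) = (-1)^K  where K = deg f *)
Definition alpha_values f : seq R :=
  1 :: rcons [seq f.[a] | a <- alphas f] ((-1) ^+ (size f).-1).

Definition SIGN f : Prop :=
  forall i : nat, (i < (size (alphas f)).+1)%N ->
    (alpha_values f)`_i.+1 * (alpha_values f)`_i <= 0.

Definition MULT f : Prop :=
  forall beta : R, root f^`() beta -> (1 < mup beta f^`())%N -> root f beta.
End Alphas.

From HB Require Import structures.
From mathcomp Require Import all_boot all_order all_algebra.
From mathcomp Require Import polyrcf polyorder complex.
From mathcomp Require Import boolp reals.
From mathcomp Require Import ring lra zify.
Set Implicit Arguments. Unset Strict Implicit. Unset Printing Implicit Defensive.
Import Order.TTheory GRing.Theory Num.Theory.
Local Open Scope ring_scope.

(* The alpha_i are the roots of f'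
   of odd multiplicity, i.e. the points where f' changes sign.
   If f has only real roots, then f'^2 - f f'' > 0 away from the roots of f.
   At a root b of f' this forces f(b) = 0 when f''(b) = 0, which is MULT, and
   f(b) f''(b) < 0 otherwise; as f''(alpha_i) has the sign (-1)^(i-1), this is
   SIGN.
   Conversely, under SIGN the values of f at M > alpha_1 > ... > alpha_k > -M
   alternate weakly in sign, so the intermediate value theorem yields more
   distinct real roots of f than there are alpha_i with f(alpha_i) <> 0.  By
   MULT these alpha_i are exactly the roots of f' that are not roots of f, and
   they are simple, while a root x of f has multiplicity 1 + ord_x(f').
   Adding up, the real roots of f have total multiplicity at least K.
   For (b) and (c): f' has no root to the left of all the roots of a
   real-rooted f, and (-1)^K f > 0 there; conversely, if f' has no negative
   root, then (-1)^(K-1) f increases on ]-oo, 0], so a negative root of f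
   forces (-1)^K f(0) < 0. *)

Section CountMem.
Variable T : eqType.
Implicit Types (s u : seq T) (P : pred T).

Lemma sum_count_mem u s P : uniq u ->
  (\sum_(x <- u | P x) count_mem x s)%N = count (fun x => (x \in u) && P x) s.
Proof.
move=> uu; elim: s => [|a s IH] /=; first by rewrite big1.
rewrite -IH big_split /= big_mkcond /=; congr (_ + _)%N.
have [au|au] := boolP (a \in u); last first.
  rewrite big1_seq // => x /andP[_ xu]; case: eqP => [xa|]; last by case: (P x).
  by rewrite xa xu in au.
rewrite (bigD1_seq a) //= eqxx big1 => [|x xa]; first by case: (P a).
by rewrite eq_sym (negbTE xa); case: (P x).
Qed.

Lemma count_sum_count_mem u s P : uniq u -> {subset s <= u} ->
  count P s = (\sum_(x <- u | P x) count_mem x s)%N.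
Proof.
by move=> uu su; rewrite sum_count_mem //; apply: eq_in_count => x /su ->.
Qed.

Lemma odd_count_filter_odd u s P : uniq u -> {subset s <= u} ->
  odd (count P s) = odd (count P [seq x <- u | odd (count_mem x s)]).
Proof.
move=> uu su; rewrite (count_sum_count_mem P uu su) count_filter.
elim: u {uu su} => [|x u IH]; first by rewrite big_nil.
by rewrite big_cons /=; case: (P x) => //=; rewrite oddD IH; case: odd.
Qed.

Lemma count_filter_odd u s P : uniq u -> {subset s <= u} ->
  {in s, forall x, P x -> count_mem x s <= 1}%N ->
  count P s = count P [seq x <- u | odd (count_mem x s)].
Proof.
move=> uu su Ps1; rewrite (count_sum_count_mem P uu su) count_filter -sum1_count.
rewrite big_mkcond [RHS]big_mkcond /=; apply: eq_bigr => x _.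
case Px: (P x) => //=.
have : (count_mem x s <= 1)%N.
  by have [/Ps1->|/count_memPn->] := boolP (x \in s).
by case: (count_mem x s) => [|[|]].
Qed.

End CountMem.

Section RealClosedPoly.
Variable R : rcfType.
Implicit Types (p q g h : {poly R}) (x : R).

Lemma count_gt_nth_sorted (w : seq R) i : sorted >%R w -> (i < size w)%N ->
  count (fun x => w`_i < x) w = i.
Proof.
elim: w i => [|a w IH] i //=.
rewrite path_sortedE; last by move=> ? ? ? lt1 lt2; apply: lt_trans lt2 lt1.
case/andP=> aw sw; case: i => [|i] /= ltis.
  rewrite ltxx add0n; apply/eqP; rewrite eqn0Ngt -has_count.
  by apply/hasPn => x /(allP aw) /lt_gtF ->.
by rewrite IH // [_ < a](allP aw _ (mem_nth 0 ltis)).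
Qed.

Lemma in_rootsR p x : p != 0 -> (x \in rootsR p) = root p x.
Proof. by move=> p0; rewrite -(roots_on_rootsR p0 x) in_itv. Qed.

Lemma mupE p x : p != 0 -> mup x p = \mu_x p.
Proof.
move=> p0; apply/eqP; rewrite eqn_leq mup_leq // root_le_mu // ltnn /=.
by rewrite mup_geq // root_mu.
Qed.

Lemma mup_deriv_root p x : p^`() != 0 -> root p x -> mup x p = (mup x p^`()).+1.
Proof.
move=> dp0 px; have p0 : p != 0 by apply: contraNneq dp0 => ->; rewrite deriv0.
by rewrite !mupE // mu_deriv_root // addn1.
Qed.

Lemma near_same_sign h x : ~~ root h x ->
  exists2 d : R, 0 < d & forall y, `|y - x| < d -> 0 < h.[y] * h.[x].
Proof.
rewrite rootE => hx; have hx_gt0 : 0 < `|h.[x]| by rewrite normr_gt0.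
have [d d0 Hd] := poly_cont x h hx_gt0.
exists d => // y /Hd; rewrite ltr_distl.
case: (ltrgtP h.[x] 0) => [hx_neg|hx_pos|hx0]; last by rewrite hx0 eqxx in hx.
  by rewrite ltr0_norm // => /andP[h1 h2]; nra.
by rewrite gtr0_norm // => /andP[h1 h2]; nra.
Qed.

Lemma sign_near_root g x : g != 0 -> exists2 d : R, 0 < d &
  forall t u, x - d < t < x -> x < u < x + d -> (g.[t] * g.[u] < 0) = odd (mup x g).
Proof.
move=> g0; have [m [h /implyP/(_ g0) hx Dg]] := multiplicity_XsubC g x.
have -> : mup x g = m by rewrite Dg mupMr // mup_XsubCX eqxx.
have [d d0 Hd] := near_same_sign hx.
exists d => // t u /andP[t1 t2] /andP[u1 u2].
have htu : 0 < h.[t] * h.[u].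
  have := mulr_gt0 (Hd t _) (Hd u _); rewrite !ltr_distl.
  have -> : h.[t] * h.[x] * (h.[u] * h.[x]) = h.[t] * h.[u] * h.[x] ^+ 2 by ring.
  by rewrite pmulr_lgt0 ?exprn_even_gt0 //; apply; apply/andP; split; lra.
rewrite Dg !(hornerM, horner_exp, hornerXsubC) mulrACA -exprMn pmulr_rlt0 //.
have tu_lt0 : (t - x) * (u - x) < 0 by rewrite nmulr_rlt0 ?subr_lt0 ?subr_gt0.
by have [om|em] := boolP (odd m); [rewrite exprn_odd_lt0 | rewrite exprn_even_lt0].
Qed.

Definition changes_sign_at g x : Prop :=
  exists2 e : R, 0 < e &
    forall t u : R, x - e < t < x -> x < u < x + e -> g.[t] * g.[u] < 0.

Lemma changes_sign_atP g x : g != 0 -> changes_sign_at g x <-> odd (mup x g).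
Proof.
move=> g0; have [d d0 Hd] := sign_near_root x g0.
split=> [[e e0 He]|odd_m]; last by exists d => // t u tx ux; rewrite Hd.
pose r := Num.min d e / 2.
have [r0 rd re] : [/\ 0 < r, r < d & r < e].
  have : 0 < Num.min d e by rewrite lt_min d0 e0.
  have : Num.min d e <= d by rewrite ge_min lexx.
  have : Num.min d e <= e by rewrite ge_min lexx orbT.
  by rewrite /r; split; lra.
by rewrite -(Hd (x - r) (x + r)) ?He //; apply/andP; split; lra.
Qed.

(* laguerre p = - p^2 (p'/p)'; for p = \prod_(r <- t) ('X - r%:P) this is
   p^2 \sum_(r <- t) ('X - r)^-2 away from the roots of p. *)
Definition laguerre p x := p^`().[x] ^+ 2 - p.[x] * p^`()^`().[x].

Lemma laguerreZ c p x : laguerre (c *: p) x = c ^+ 2 * laguerre p x.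
Proof. by rewrite /laguerre !derivZ !hornerZ; ring. Qed.

Lemma laguerre_XsubCM r p x :
  laguerre (('X - r%:P) * p) x = p.[x] ^+ 2 + (x - r) ^+ 2 * laguerre p x.
Proof.
rewrite /laguerre !derivE !mul0r !mul1r add0r.
by rewrite !(hornerD, hornerM, hornerX, hornerN, hornerC); ring.
Qed.

Lemma laguerre_prod_XsubC_ge0 (t : seq R) x :
  0 <= laguerre (\prod_(r <- t) ('X - r%:P)) x.
Proof.
elim: t => [|a t IH].
  by rewrite big_nil /laguerre -polyC1 !derivC !hornerC expr2 !mulr0 subr0.
by rewrite big_cons laguerre_XsubCM addr_ge0 ?sqr_ge0 // mulr_ge0 ?sqr_ge0.
Qed.

Lemma laguerre_prod_XsubC_gt0 (t : seq R) x : t != [::] ->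
  ~~ root (\prod_(r <- t) ('X - r%:P)) x ->
  0 < laguerre (\prod_(r <- t) ('X - r%:P)) x.
Proof.
case: t => [|a t] // _; rewrite big_cons laguerre_XsubCM rootM negb_or.
case/andP=> _ t_x; have := mulr_ge0 (sqr_ge0 (x - a)) (laguerre_prod_XsubC_ge0 t x).
have : 0 < (\prod_(r <- t) ('X - r%:P)).[x] ^+ 2 by rewrite exprn_even_gt0.
lra.
Qed.

Lemma prod_subr_sign_ge0 (t : seq R) x :
  0 <= (-1) ^+ count (fun r => x < r) t * \prod_(r <- t) (x - r).
Proof.
elim: t => [|a t IH]; first by rewrite big_nil mulr1 ler01.
rewrite big_cons /= exprD mulrACA mulr_ge0 //.
by case: ltrP => /= h; rewrite ?expr1 ?expr0; lra.
Qed.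

Lemma deriv_prod_XsubC_neq0 (t : seq R) x : t != [::] ->
  all (fun r => x < r) t -> (\prod_(r <- t) ('X - r%:P))^`().[x] != 0.
Proof.
move=> t0 xt; pose P (t : seq R) := \prod_(r <- t) ('X - r%:P).
suff [_ _ /(_ t0)] : [/\ 0 < (-1) ^+ size t * (P t).[x],
    (-1) ^+ size t * (P t)^`().[x] <= 0 &
    t != [::] -> (-1) ^+ size t * (P t)^`().[x] < 0].
  by rewrite /P; apply: contraTneq => ->; rewrite mulr0 ltxx.
elim: t {t0} xt => [|a t IH] /=.
  by rewrite /P big_nil -polyC1 derivC !hornerC expr0 mul1r mulr0; split=> //; lra.
case/andP=> xa /IH[Pt_gt0 dPt_le0 _].
have -> : (-1) ^+ (size t).+1 * (P (a :: t)).[x] =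
    (a - x) * ((-1) ^+ size t * (P t).[x]).
  by rewrite /P big_cons hornerM hornerXsubC exprS; ring.
have -> : (-1) ^+ (size t).+1 * (P (a :: t))^`().[x] =
    - ((-1) ^+ size t * (P t).[x]) + (a - x) * ((-1) ^+ size t * (P t)^`().[x]).
  rewrite /P big_cons derivM derivXsubC mul1r exprS.
  by rewrite !(hornerD, hornerM, hornerX, hornerN, hornerC); ring.
have : (a - x) * ((-1) ^+ size t * (P t)^`().[x]) <= 0.
  by rewrite mulr_ge0_le0 // subr_ge0 ltW.
by split=> [||_]; [rewrite mulr_gt0 // subr_gt0 | lra | lra].
Qed.

Lemma noroot_minfty_sign p x : 0 < lead_coef p ->
  {in `]-oo, x], forall y, ~~ root p y} -> 0 < (-1) ^+ (size p).-1 * p.[x].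
Proof.
move=> lc_gt0 /sgp_minftyP/(_ x); rewrite in_itv /= lexx => /(_ isT).
rewrite /sgp_minfty sgrM (gtr0_sg lc_gt0) mulr1 => sg_px.
by rewrite -sgr_gt0 sgrM sg_px -sgrM -expr2 sqrr_sign sgr1.
Qed.

(* The term ~~ root p y0 lets the induction absorb a zero of p at the next
   point of the path. *)
Lemma roots_of_alternating_path p y0 (ys : seq R) :
  path >%R y0 ys -> path (fun a b => p.[b] * p.[a] <= 0) y0 ys ->
  exists rs : seq R, [/\ uniq rs, all (root p) rs, all (fun r => r <= y0) rs &
    (count (predC (root p)) (y0 :: ys) <= size rs + ~~ root p y0)%N].
Proof.
elim: ys y0 => [|y1 ys IH] y0 /=; first by exists [::]; split=> //=; rewrite addn0.
case/andP=> y10 /IH {}IH /andP[sign10 /IH[rs [uniq_rs root_rs le_rs count_rs]]].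
have notin_rs r : y1 < r -> r \notin rs.
  by move=> y1r; apply/negP => /(allP le_rs); rewrite leNgt y1r.
have le0_rs : all (fun r => r <= y0) rs.
  by apply/allP => r /(allP le_rs) /le_trans; apply; apply: ltW.
have [py0|py0] := boolP (root p y0).
  exists (y0 :: rs); split=> /=; rewrite ?notin_rs ?py0 ?lexx //.
  by move: count_rs => /=; case: (root p y1) => /=; lia.
have [py1|py1] := boolP (root p y1).
  exists rs; split=> //=.
  by move: count_rs => /=; rewrite py1 /=; lia.
have sign10_lt0 : p.[y1] * p.[y0] < 0 by rewrite lt_neqAle sign10 mulf_neq0.
have [r /[!in_itv] /andP[y1r ry0] pr] := poly_ivtoo (ltW y10) sign10_lt0.
exists (r :: rs); split=> /=; rewrite ?notin_rs ?pr ?(ltW ry0) //.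
by move: count_rs => /=; rewrite py1 /=; lia.
Qed.

Lemma prod_mup_dvdp p (u : seq R) : uniq u ->
  \prod_(r <- flatten [seq nseq (mup x p) x | x <- u]) ('X - r%:P) %| p.
Proof.
elim: u => [|y u IH] /=; first by rewrite big_nil dvd1p.
case/andP=> yu /IH dvd_u; rewrite big_cat /= big_nseq iter_mulr_1.
rewrite Gauss_dvdp ?dvd_u ?andbT; last first.
  rewrite coprimep_expl // coprimep_sym coprimep_XsubC root_prod_XsubC.
  by apply: contra yu => /flatten_mapP[x xu]; rewrite mem_nseq => /andP[_ /eqP->].
by have [->|p0] := eqVneq p 0; rewrite ?dvdp0 // -mup_geq.
Qed.

Definition real_rooted p :=
  forall z : R[i], root (map_poly (real_complex R) p) z -> z \is Num.real.

Lemma real_rootedM p q : real_rooted p -> real_rooted q -> real_rooted (p * q).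
Proof. by move=> p_real q_real z; rewrite rmorphM rootM => /orP[/p_real|/q_real]. Qed.

Lemma real_rootedC c : c != 0 -> real_rooted c%:P.
Proof. by move=> c0 z; rewrite map_polyC rootC fmorph_eq0 (negbTE c0). Qed.

Lemma real_rooted_prod_XsubC (t : seq R) : real_rooted (\prod_(r <- t) ('X - r%:P)).
Proof.
move=> z; rewrite rmorph_prod /= (eq_bigr (fun r => 'X - (real_complex R r)%:P)).
  rewrite -(big_map (real_complex R) xpredT (fun z => 'X - z%:P)) root_prod_XsubC.
  by case/mapP=> x _ ->; apply/complex_realP; exists x.
by move=> r _; rewrite map_polyXsubC.
Qed.

Lemma real_rooted_of_mup_sum p (u : seq R) : p != 0 -> uniq u ->
  ((size p).-1 <= \sum_(x <- u) mup x p)%N -> real_rooted p.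
Proof.
move=> p0 uu; have /dvdpP[g Dp] := prod_mup_dvdp p uu.
set t := flatten _ in Dp.
have g0 : g != 0 by apply: contraNneq p0; rewrite Dp => ->; rewrite mul0r.
have size_t : size t = (\sum_(x <- u) mup x p)%N.
  rewrite size_flatten /shape -map_comp sumnE big_map.
  by apply: eq_bigr => x _; rewrite /= size_nseq.
have -> : size p = (size g + size t)%N.
  rewrite Dp size_mul ?g0 ?monic_neq0 ?monic_prod_XsubC //.
  by rewrite size_prod_XsubC addnS.
rewrite size_t => size_g; have [c Dg] : exists c, g = c%:P.
  by exists g`_0; apply: size1_polyC; move: size_g; case: (size g) => //; lia.
have c0 : c != 0 by rewrite -polyC_eq0 -Dg.
rewrite Dp Dg; apply: real_rootedM; first exact: real_rootedC.
exact: real_rooted_prod_XsubC.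
Qed.

Lemma real_rooted_split p : real_rooted p ->
  exists t : seq R, p = lead_coef p *: \prod_(r <- t) ('X - r%:P).
Proof.
move=> p_real; have [->|p0] := eqVneq p 0.
  by exists [::]; rewrite lead_coef0 scale0r.
have [zs Dp] := closed_field_poly_normal (map_poly (real_complex R) p).
exists (map (@complex.Re R) zs); apply: (@map_poly_inj _ _ (real_complex R)).
rewrite [LHS]Dp lead_coef_map map_polyZ rmorph_prod big_map /=.
congr (_ *: _); apply: eq_big_seq => z zs_z.
rewrite map_polyXsubC /= RRe_real //; apply: p_real.
by rewrite Dp rootZ ?root_prod_XsubC // lead_coef_eq0 map_poly_eq0.
Qed.

Lemma real_rooted_root p z : real_rooted p ->
  root (map_poly (real_complex R) p) z -> exists2 x, z = real_complex R x & root p x.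
Proof.
move=> p_real pz; have Dz := esym (RRe_real (p_real z pz)).
by exists (complex.Re z); last by move: pz; rewrite {1}Dz fmorph_root.
Qed.

Lemma lec0R x : (0 <= real_complex R x) = (0 <= x).
Proof. by rewrite lecE /= eqxx. Qed.

Lemma ltc0R x : (0 < real_complex R x) = (0 < x).
Proof. by rewrite ltcE /= eqxx. Qed.

Lemma complex_roots_ge0 p :
  (forall z, root (map_poly (real_complex R) p) z -> 0 <= z) <->
  real_rooted p /\ (forall x, root p x -> 0 <= x).
Proof.
split=> [p_ge0 | [p_real p_ge0] z /(real_rooted_root p_real) [x -> /p_ge0]].
  split=> [z /p_ge0 /ger0_real // | x px].
  by rewrite -lec0R p_ge0 // fmorph_root.
by rewrite lec0R.
Qed.

Lemma complex_roots_gt0 p :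
  (forall z, root (map_poly (real_complex R) p) z -> 0 < z) <->
  real_rooted p /\ (forall x, root p x -> 0 < x).
Proof.
split=> [p_gt0 | [p_real p_gt0] z /(real_rooted_root p_real) [x -> /p_gt0]].
  split=> [z /p_gt0 /gtr0_real // | x px].
  by rewrite -ltc0R p_gt0 // fmorph_root.
by rewrite ltc0R.
Qed.

End RealClosedPoly.

Section DerivativeSplits.
Variable R : rcfType.
Variables (f : {poly R}) (s : seq R).
Hypothesis deg_f_gt1 : (1 < (size f).-1)%N.
Hypothesis lc_f_gt0 : 0 < lead_coef f.
Hypothesis Df' : f^`() = lead_coef f^`() *: \prod_(r <- s) ('X - r%:P).

Lemma f_neq0 : f != 0.
Proof. by rewrite -lead_coef_eq0 gt_eqF. Qed.

Lemma lead_coef_deriv_gt0 : 0 < lead_coef f^`().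
Proof.
rewrite lead_coefE size_deriv coef_deriv.
have -> : ((size f).-1.-1.+1 = (size f).-1)%N by case: (size f).-1 deg_f_gt1.
by rewrite pmulrn_lgt0 ?(ltn_trans _ deg_f_gt1) // -lead_coefE.
Qed.

Lemma deriv_neq0 : f^`() != 0.
Proof. by rewrite -lead_coef_eq0 gt_eqF ?lead_coef_deriv_gt0. Qed.

Lemma deriv2_neq0 : f^`()^`() != 0.
Proof.
by rewrite -size_poly_eq0 !size_deriv; case: (size f).-1 deg_f_gt1 => [|[|]].
Qed.

Lemma size_deriv_roots : size s = (size f).-2.
Proof.
have := size_deriv f; rewrite [in LHS]Df' size_scale ?gt_eqF ?lead_coef_deriv_gt0 //.
by rewrite size_prod_XsubC => <-.
Qed.

Lemma root_deriv b : root f^`() b = (b \in s).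
Proof. by rewrite Df' rootZ ?gt_eqF ?lead_coef_deriv_gt0 // root_prod_XsubC. Qed.

Lemma mup_deriv b : mup b f^`() = count_mem b s.
Proof.
rewrite Df' -mul_polyC mupMr ?mu_prod_XsubC //.
by rewrite rootC gt_eqF ?lead_coef_deriv_gt0.
Qed.

Lemma mem_rootsR_deriv b : (b \in rootsR f^`()) = (b \in s).
Proof. by rewrite in_rootsR ?deriv_neq0 // root_deriv. Qed.

Lemma deriv_real_rooted : real_rooted f^`().
Proof.
rewrite Df' -mul_polyC; apply: real_rootedM; last exact: real_rooted_prod_XsubC.
by apply: real_rootedC; rewrite gt_eqF ?lead_coef_deriv_gt0.
Qed.

Lemma inflection_point_even b : b \in s ->
  inflection_point f b <-> ~~ odd (count_mem b s).
Proof.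
move=> sb; rewrite -mup_deriv (mup_deriv_root deriv2_neq0) ?root_deriv //= negbK.
exact: changes_sign_atP deriv2_neq0.
Qed.

Definition odd_roots := [seq b <- rootsR f^`() | odd (count_mem b s)].

Lemma alphasE : alphas f = rev odd_roots.
Proof.
rewrite /alphas /odd_roots; congr rev; apply: eq_in_filter => b.
rewrite mem_rootsR_deriv => sb; apply/asboolP/idP => [not_infl|odd_b].
  by apply/negPn/negP => even_b; apply/not_infl/(inflection_point_even sb).
by move/(inflection_point_even sb); rewrite odd_b.
Qed.

Lemma mem_alphas b : b \in alphas f -> b \in s.
Proof. by rewrite alphasE mem_rev mem_filter mem_rootsR_deriv => /andP[]. Qed.

Lemma alphas_sorted : sorted >%R (alphas f).
Proof.
rewrite alphasE rev_sorted; apply: sorted_filter; first exact: lt_trans.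
exact: sorted_roots.
Qed.

Lemma odd_count_alphas (P : pred R) : odd (count P s) = odd (count P (alphas f)).
Proof.
rewrite alphasE count_rev; apply: odd_count_filter_odd; first exact: uniq_roots.
by move=> b; rewrite mem_rootsR_deriv.
Qed.

Section RealRooted.
Hypothesis f_real : real_rooted f.

Lemma real_rooted_factor :
  exists2 t : seq R, t != [::] & f = lead_coef f *: \prod_(r <- t) ('X - r%:P).
Proof.
have [t Df] := real_rooted_split f_real; exists t => //.
apply: contraTneq deg_f_gt1; rewrite {1}Df => ->.
by rewrite big_nil alg_polyC size_polyC gt_eqF.
Qed.

Lemma laguerre_gt0 x : ~~ root f x -> 0 < laguerre f x.
Proof.
have [t t0 Df] := real_rooted_factor; rewrite Df rootZ ?gt_eqF // laguerreZ => fx.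
by rewrite mulr_gt0 ?exprn_gt0 ?laguerre_prod_XsubC_gt0.
Qed.

Lemma MULT_of_real_rooted : MULT f.
Proof.
move=> b f'b mup_gt1; apply/negPn/negP => fb.
have f''b : root f^`()^`() b.
  apply/negPn/negP => /mupNroot f''b.
  by move: mup_gt1; rewrite (mup_deriv_root deriv2_neq0 f'b) f''b.
have := laguerre_gt0 fb; rewrite /laguerre (rootP f'b) (rootP f''b).
by rewrite expr2 !mul0r mulr0 subrr ltxx.
Qed.

Lemma sign_at_deriv_root a : a \in s ->
  (-1) ^+ count (fun r => a < r) s * f.[a] <= 0.
Proof.
move=> sa; have [fa|fa] := boolP (root f a); first by rewrite (rootP fa) mulr0.
have f'a : f^`().[a] = 0 by apply/rootP; rewrite root_deriv.
have f''a : f^`()^`().[a] = lead_coef f^`() * \prod_(r <- rem a s) (a - r).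
  rewrite [in LHS]Df' (big_rem a sa) /= derivZ derivM derivXsubC mul1r hornerZ hornerD.
  rewrite hornerM hornerXsubC subrr mul0r addr0 horner_prod.
  by congr (_ * _); apply: eq_bigr => r _; rewrite hornerXsubC.
have sign_f''a : 0 <= (-1) ^+ count (fun r => a < r) s * f^`()^`().[a].
  rewrite f''a mulrCA; apply: mulr_ge0; first exact/ltW/lead_coef_deriv_gt0.
  by rewrite (permP (perm_to_rem sa)) /= ltxx add0n prod_subr_sign_ge0.
have := laguerre_gt0 fa; rewrite /laguerre f'a expr2 mul0r sub0r oppr_gt0.
set sg := (-1) ^+ _ in sign_f''a *; have sg2 : sg * sg = 1 by rewrite -expr2 sqrr_sign.
have -> : f.[a] * f^`()^`().[a] = (sg * f.[a]) * (sg * f^`()^`().[a]).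
  by rewrite mulrACA sg2 mul1r.
by rewrite leNgt; apply: contraTN => sgfa_gt0; rewrite pmulr_rlt0 // -leNgt.
Qed.

Lemma alpha_values_sign j : (j <= (size (alphas f)).+1)%N ->
  0 <= (-1) ^+ j * (alpha_values f)`_j.
Proof.
rewrite /alpha_values; case: j => [|j] /= j_le; first by rewrite mulr1 ler01.
rewrite nth_rcons size_map; case: ltnP => [j_lt|k_le].
  rewrite (nth_map 0) //; have := sign_at_deriv_root (mem_alphas (mem_nth 0 j_lt)).
  rewrite -signr_odd odd_count_alphas count_gt_nth_sorted ?alphas_sorted // signr_odd.
  by rewrite exprS mulN1r mulNr oppr_ge0.
have -> : j = size (alphas f) by lia.
rewrite eqxx -exprD -signr_odd.
have -> : (size f).-1 = (size s).+1.
  by rewrite size_deriv_roots; case: (size f).-1 deg_f_gt1.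
by rewrite addSn addnS /= oddD -!count_predT odd_count_alphas addbb.
Qed.

Lemma SIGN_of_real_rooted : SIGN f.
Proof.
move=> i lt_i.
have := mulr_ge0 (alpha_values_sign lt_i) (alpha_values_sign (ltnW lt_i)).
by rewrite mulrACA -exprD addSn -signr_odd /= oddD addbb /= mulN1r oppr_ge0.
Qed.

Lemma deriv_noroot_below x : (forall r, root f r -> x < r) -> ~~ root f^`() x.
Proof.
move=> below; have [t t0 Df] := real_rooted_factor.
rewrite Df derivZ rootZ ?gt_eqF //; apply: deriv_prod_XsubC_neq0 t0 _.
by apply/allP => r tr; apply: below; rewrite Df rootZ ?gt_eqF // root_prod_XsubC.
Qed.

End RealRooted.

Section SignMult.
Hypotheses (f_SIGN : SIGN f) (f_MULT : MULT f).

Lemma count_nonroots_deriv :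
  count (predC (root f)) s = count (predC (root f)) (alphas f).
Proof.
rewrite alphasE count_rev; apply: count_filter_odd => [||b sb /= fb].
- exact: uniq_roots.
- by move=> b; rewrite mem_rootsR_deriv.
rewrite leqNgt -mup_deriv; apply: contra fb; apply: f_MULT.
by rewrite root_deriv.
Qed.

(* Neither f nor f' vanishes beyond -M and M, so these points can stand in for
   alpha_(k+1) = -oo and alpha_0 = +oo. *)
Let M := cauchy_bound (f * f^`()).

Lemma noroot_ge_M y : y \in `[M, +oo[ -> ~~ root f y.
Proof.
move/(ge_cauchy_bound (mulf_neq0 f_neq0 deriv_neq0)).
by rewrite rootM negb_or => /andP[].
Qed.

Lemma noroot_le_NM y : y \in `]-oo, - M] -> ~~ root f y.
Proof.
move/(le_cauchy_bound (mulf_neq0 f_neq0 deriv_neq0)).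
by rewrite rootM negb_or => /andP[].
Qed.

Lemma alphas_bounded b : b \in alphas f -> - M < b < M.
Proof.
move/mem_alphas; rewrite -root_deriv => f'b.
have /(root_in_cauchy_bound (mulf_neq0 f_neq0 deriv_neq0)) : root (f * f^`()) b.
  by rewrite rootM f'b orbT.
by rewrite in_itv.
Qed.

Lemma sample_decreasing : path >%R M (rcons (alphas f) (- M)).
Proof.
have M_gt0 : 0 < M := cauchy_bound_gt0 _.
rewrite rcons_path path_sortedE ?alphas_sorted ?andbT; last first.
  by move=> ? ? ? lt1 lt2; apply: lt_trans lt2 lt1.
apply/andP; split; first by apply/allP => b /alphas_bounded /andP[].
by case/predU1P: (mem_last M (alphas f)) => [->|/alphas_bounded /andP[]//] /=; lra.
Qed.

Lemma sgr_sample j : (j <= (size (alphas f)).+1)%N ->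
  Num.sg f.[(M :: rcons (alphas f) (- M))`_j] = Num.sg (alpha_values f)`_j.
Proof.
rewrite /alpha_values; case: j => [|j] /= j_le.
  by rewrite (sgp_pinftyP noroot_ge_M) ?in_itv /= ?lexx // /sgp_pinfty gtr0_sg // sgr1.
rewrite !nth_rcons size_map; case: ltnP => [j_lt|k_le]; first by rewrite (nth_map 0).
have -> : j = size (alphas f) by lia.
rewrite eqxx (sgp_minftyP noroot_le_NM) ?in_itv /= ?lexx // /sgp_minfty.
by rewrite sgrM (gtr0_sg lc_f_gt0) mulr1.
Qed.

Lemma sample_alternating :
  path (fun a b => f.[b] * f.[a] <= 0) M (rcons (alphas f) (- M)).
Proof.
apply/(pathP 0) => i; rewrite size_rcons => lt_i.
rewrite -sgr_le0 sgrM -[nth 0 _ i]/((M :: rcons (alphas f) (- M))`_i.+1).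
by rewrite !sgr_sample ?(ltnW lt_i) // -sgrM sgr_le0 f_SIGN.
Qed.

Lemma nonroot_alphas_lt_rootsR :
  ((count (predC (root f)) (alphas f)).+1 <= size (rootsR f))%N.
Proof.
have [rs [uniq_rs root_rs _]] :=
  roots_of_alternating_path sample_decreasing sample_alternating.
have fM : ~~ root f M by rewrite noroot_ge_M // in_itv /= lexx.
have fNM : ~~ root f (- M) by rewrite noroot_le_NM // in_itv /= lexx.
rewrite /= -cats1 count_cat /= fM fNM => count_rs.
apply: leq_trans (uniq_leq_size uniq_rs _); first by move: count_rs => /=; lia.
by move=> r /(allP root_rs); rewrite in_rootsR ?f_neq0.
Qed.

Lemma size_le_mup_sum : ((size f).-1 <= \sum_(x <- rootsR f) mup x f)%N.
Proof.
rewrite big_seq (eq_bigr (fun x => 1 + count_mem x s)%N) => [|x]; last first.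
  rewrite in_rootsR ?f_neq0 // => fx.
  by rewrite (mup_deriv_root deriv_neq0 fx) mup_deriv.
rewrite -big_seq big_split /= sum1_size (sum_count_mem _ predT (uniq_roots _ _ _)).
rewrite (eq_count (a2 := root f)) => [|x]; last by rewrite in_rootsR ?f_neq0 ?andbT.
have := nonroot_alphas_lt_rootsR; rewrite -count_nonroots_deriv.
have := count_predC (root f) s; rewrite size_deriv_roots.
by case: (size f).-1 deg_f_gt1 => //=; lia.
Qed.

Lemma real_rooted_of_SIGN_MULT : real_rooted f.
Proof. exact: real_rooted_of_mup_sum f_neq0 (uniq_roots _ _ _) size_le_mup_sum. Qed.

End SignMult.

Lemma real_rootedE : real_rooted f <-> SIGN f /\ MULT f.
Proof.
split=> [f_real | [f_SIGN f_MULT]]; last exact: real_rooted_of_SIGN_MULT.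
by split; [exact: SIGN_of_real_rooted | exact: MULT_of_real_rooted].
Qed.

Lemma deriv_roots_ge0_sign x : (forall b, root f^`() b -> 0 <= b) ->
  root f x -> x < 0 -> (-1) ^+ (size f).-1 * f.[0] < 0.
Proof.
move=> f'_ge0 fx x_lt0.
have f'_sign y : y < 0 -> 0 < (-1) ^+ (size f).-2 * f^`().[y].
  move=> y_lt0; rewrite -size_deriv; apply: noroot_minfty_sign lead_coef_deriv_gt0 _.
  by move=> b; rewrite in_itv /= => b_le; apply/negP => /f'_ge0; lra.
have : ((-1) ^+ (size f).-2 *: f).[x] < ((-1) ^+ (size f).-2 *: f).[0].
  apply: (derpr (a := x) (b := 0)); last by rewrite in_itv /= x_lt0 ?lexx.
  by move=> y; rewrite in_itv /= derivZ hornerZ => /andP[_ /f'_sign].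
rewrite !hornerZ (rootP fx) mulr0.
have -> : (size f).-1 = (size f).-2.+1 by case: (size f).-1 deg_f_gt1.
by rewrite exprS -mulrA mulN1r oppr_lt0.
Qed.

Lemma roots_ge0E :
  (forall z, root (map_poly (real_complex R) f) z -> 0 <= z) <->
  [/\ SIGN f, MULT f,
      (forall z, root (map_poly (real_complex R) f^`()) z -> 0 <= z)
    & 0 <= (-1) ^+ (size f).-1 * f.[0]].
Proof.
split=> [/complex_roots_ge0[f_real f_ge0] | [f_SIGN f_MULT]].
  have [f_SIGN f_MULT] := real_rootedE.1 f_real; split=> //.
    apply/complex_roots_ge0; split=> [|b]; first exact: deriv_real_rooted.
    rewrite leNgt; apply: contraLR => /negbNE b_lt0.
    by apply: deriv_noroot_below => // r /f_ge0; lra.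
  have [f0|f0] := boolP (root f 0); first by rewrite (rootP f0) mulr0.
  apply/ltW/noroot_minfty_sign => // y; rewrite in_itv /= => y_le0.
  by apply: contraNN f0 => fy; have /le_anti <- : y <= 0 <= y by rewrite y_le0 f_ge0.
case/complex_roots_ge0=> _ f'_ge0 f0_ge0; apply/complex_roots_ge0.
split=> [|x fx]; first exact/real_rootedE.
by rewrite leNgt; apply/negP => /(deriv_roots_ge0_sign f'_ge0 fx); lra.
Qed.

Lemma roots_gt0E :
  (forall z, root (map_poly (real_complex R) f) z -> 0 < z) <->
  [/\ SIGN f, MULT f,
      (forall z, root (map_poly (real_complex R) f^`()) z -> 0 < z)
    & 0 < (-1) ^+ (size f).-1 * f.[0]].
Proof.
split=> [/complex_roots_gt0[f_real f_gt0] | [f_SIGN f_MULT]].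
  have [f_SIGN f_MULT] := real_rootedE.1 f_real; split=> //.
    apply/complex_roots_gt0; split=> [|b]; first exact: deriv_real_rooted.
    rewrite ltNge; apply: contraLR => /negbNE b_le0.
    by apply: deriv_noroot_below => // r /f_gt0; lra.
  apply: noroot_minfty_sign => // y; rewrite in_itv /= => y_le0.
  by apply/negP => /f_gt0; lra.
case/complex_roots_gt0=> _ f'_gt0 f0_gt0; apply/complex_roots_gt0.
split=> [|x fx]; first exact/real_rootedE.
have f'_ge0 b : root f^`() b -> 0 <= b by move/f'_gt0/ltW.
case: (ltrgtP x 0) => [/(deriv_roots_ge0_sign f'_ge0 fx)|//|x0]; first lra.
by move: fx f0_gt0; rewrite x0 => /rootP->; rewrite mulr0 ltxx.
Qed.

End DerivativeSplits.

Theorem propositionA3 (R : realType) (f : {poly R}) :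
  (1 < (size f).-1)%N ->
  0 < lead_coef f ->
  (forall z : complex R, root (map_poly (real_complex R) f^`()) z ->
     z \is Num.real) ->
  [/\
   (* (a) *)
   (forall z : complex R, root (map_poly (real_complex R) f) z ->
      z \is Num.real)
     <-> SIGN f /\ MULT f,
   (* (b) *)
   (forall z : complex R, root (map_poly (real_complex R) f) z -> 0 <= z)
     <-> [/\ SIGN f, MULT f,
            (forall z : complex R, root (map_poly (real_complex R) f^`()) z ->
               0 <= z)
          & 0 <= (-1) ^+ (size f).-1 * f.[0]] &
   (* (c) *)
   (forall z : complex R, root (map_poly (real_complex R) f) z -> 0 < z)
     <-> [/\ SIGN f, MULT f,
            (forall z : complex R, root (map_poly (real_complex R) f^`()) z ->
               0 < z)
          & 0 < (-1) ^+ (size f).-1 * f.[0]]].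
Proof.
move=> deg_f_gt1 lc_f_gt0 /real_rooted_split[s Df'].
split; first exact: real_rootedE deg_f_gt1 lc_f_gt0 Df'.
  exact: roots_ge0E deg_f_gt1 lc_f_gt0 Df'.
exact: roots_gt0E deg_f_gt1 lc_f_gt0 Df'.
Qed.
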